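(* For rational $\delta>0$ let $e(\delta)$ be the least integer $e$ with $2^{-e}<\delta$. Let $g(m,\delta)=(m-1)e(\delta)+\frac{(m-1)m}{2}$, $\bar g(x,k,0)=x+k+1$, $\bar g(x,k,i+1)=g(\bar g(x,k,i),1/k)$, $h(\ell,m,\delta)=2^{\,e(\delta)\,\ell\,2^{5m}}$ and $\bar h(x,n,k)=h(2^x,n,1/k)\,k^{2^x}$. Let $k\ge1$ and $i\ge0$. If $X$ is a nonempty finite set with $|X|\ge\bar h(\min X,\bar g(\min X,k,i),k)$, then $X$ is $(\omega,k,i)$-superpersistent.
   Context: Strings are finite binary strings with $\preceq$ the initial-segment order; $2^i$ also denotes the set of strings of length $i$; a tree is a set of strings closed under initial segments; a leaf of a finite tree is a $\preceq$-maximal element. For finite $X=\{x_0<\dots<x_n\}$, a finite tree $T$ is $X$-quasistrong if $T\cap 2^{x_i}\ne\emptyset$ for all $i\le n$ and for each $i<n$ every $\sigma\in T\cap2^{x_i}$ has exactly two incompatible extensions in $T\cap 2^{x_{i+1}}$. $T$ is $(C,X)$-prehomogeneous if there is a color $c$ such that for all $i<n$, $\sigma\in T\cap 2^{x_i}$, $\tau\in T\cap 2^{x_{i+1}}$ with $\sigma\prec\tau$, some $\zeta\in T$ with $\sigma\preceq\zeta\preceq\tau$ has $C(\zeta)=c$. $X$ is $\omega$-large if $|X|>\min X$. Persistence ($k\ge1$, $X$ nonempty finite): $X$ is $(\omega,k,0)$-persistent iff $\omega$-large; for $i\ge1$, $X$ is $(\omega,k,i)$-persistent iff $X$ contains an $(\omega,k,i-1)$-persistent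 subset $Y$ such that for every $X$-quasistrong tree $T$ and every $C:T\cap 2^{\max X}\to k$ there exist $c<k$ and a $Y$-quasistrong finite tree $S\subseteq T$ all of whose leaves have extensions in $C^{-1}(c)$. Superpersistence: $X$ is $(\omega,k,i)$-superpersistent if for every family $\{T_\rho:\rho\in 2^{\min X}\}$ of $X$-quasistrong trees and every $C:2^{<\mathbb{N}}\to k$ there exist $Y\subseteq X$ and trees $S_\rho\subseteq T_\rho$ such that $Y$ is $(\omega,k,i)$-persistent and each $S_\rho$ is $Y$-quasistrong and $(C,Y)$-prehomogeneous. *)

From mathcomp Require Import all_boot.
Set Implicit Arguments. Unset Strict Implicit. Unset Printing Implicit Defensive.

(* Finite binary strings; s ⪯ t is [prefix s t]. *)
Definition str := seq bool.

(* A finite tree: a finite set of strings (given by a list, membership only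
   matters) closed under initial segments. *)
Definition is_tree (T : seq str) : Prop :=
  forall s t : str, t \in T -> prefix s t -> s \in T.

Definition incompatible (s t : str) : bool := ~~ prefix s t && ~~ prefix t s.

Definition is_leaf (S : seq str) (s : str) : Prop :=
  s \in S /\ forall t, t \in S -> prefix s t -> t = s.

(* A nonempty finite set X = {x_0 < ... < x_n} of naturals is represented by
   the strictly increasing list [:: x_0; ...; x_n] (i.e. sorted ltn X). *)
Definition minX (X : seq nat) : nat := head 0 X.
Definition maxX (X : seq nat) : nat := last 0 X.

Definition omega_large (X : seq nat) : Prop := minX X < size X.

Definition quasistrong (X : seq nat) (T : seq str) : Prop :=
  (forall i, i < size X -> exists s, s \in T /\ size s = nth 0 X i) /\
  (forall i, i.+1 < size X -> forall s, s \in T -> size s = nth 0 X i ->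
     exists t1 t2,
       t1 \in T /\ t2 \in T /\
       size t1 = nth 0 X i.+1 /\ size t2 = nth 0 X i.+1 /\
       prefix s t1 /\ prefix s t2 /\ incompatible t1 t2 /\
       (forall t, t \in T -> size t = nth 0 X i.+1 -> prefix s t ->
          t = t1 \/ t = t2)).

Definition prehomogeneous (k : nat) (C : str -> 'I_k) (X : seq nat)
    (T : seq str) : Prop :=
  exists c : 'I_k, forall i, i.+1 < size X ->
    forall s t, s \in T -> t \in T ->
      size s = nth 0 X i -> size t = nth 0 X i.+1 -> prefix s t ->
      exists z, z \in T /\ prefix s z /\ prefix z t /\ C z = c.

(* (omega,k,i)-persistence.  A colouring C : T ∩ 2^{max X} -> k is given as a
   total function str -> 'I_k; only its values on T ∩ 2^{max X} are used. *)
Fixpoint persistent (k i : nat) (X : seq nat) : Prop :=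
  match i with
  | 0 => omega_large X
  | i'.+1 =>
      exists Y : seq nat,
        sorted ltn Y /\ {subset Y <= X} /\ persistent k i' Y /\
        forall T : seq str, is_tree T -> quasistrong X T ->
        forall C : str -> 'I_k,
          exists (c : 'I_k) (S : seq str),
            is_tree S /\ {subset S <= T} /\ quasistrong Y S /\
            forall s, is_leaf S s ->
              exists t, t \in T /\ size t = maxX X /\ prefix s t /\ C t = c
  end.

(* (omega,k,i)-superpersistence. The family {T_rho : rho in 2^{min X}} is a
   function Tf : str -> seq str, only used on strings of length min X. *)
Definition superpersistent (k i : nat) (X : seq nat) : Prop :=
  forall Tf : str -> seq str,
    (forall r : str, size r = minX X -> is_tree (Tf r) /\ quasistrong X (Tf r)) ->
  forall C : str -> 'I_k,
    exists (Y : seq nat) (Sf : str -> seq str),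
      sorted ltn Y /\ {subset Y <= X} /\ persistent k i Y /\
      forall r : str, size r = minX X ->
        is_tree (Sf r) /\ {subset Sf r <= Tf r} /\
        quasistrong Y (Sf r) /\ prehomogeneous C Y (Sf r).

(* e(1/k): the least e with 2^{-e} < 1/k, i.e. (for k >= 1) the least
   natural number e with k < 2^e. *)
Definition e_inv (k : nat) : nat :=
  ex_minn (ex_intro (fun n => k < 2 ^ n) k (ltn_expl k (ltnSn 1))).

Definition g_fun (m k : nat) : nat := m.-1 * e_inv k + (m.-1 * m) %/ 2.

Fixpoint gbar (x k i : nat) : nat :=
  match i with
  | 0 => x + k + 1
  | i'.+1 => g_fun (gbar x k i') k
  end.

Definition h_fun (l m k : nat) : nat := 2 ^ (e_inv k * l * 2 ^ (5 * m)).

Definition hbar (x n k : nat) : nat := h_fun (2 ^ x) n k * k ^ (2 ^ x).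

(* Above any node of a quasistrong tree, e = e(1/k) consecutive levels
   contain 2^e > k nodes, so two of them share a colour; keeping every e-th level of X and
   arguing from the top level down gives a quasistrong subtree all of whose leaves reach a
   single colour.  Iterating, X is (omega,k,i)-persistent as soon as |X| >= persist_size,
   a bound dominated by gbar.

   For each of the 2^(min X) trees keep a node w_r and a palette F_r
   containing every colour that occurs above w_r below a top level.  If every tree has a
   colour that is dense above w_r in the current window of levels, picking M levels d+1
   apart gives prehomogeneous subtrees on a common level set Y with |Y| = M+1.  Otherwise
   a non-dense colour c of some F_r has a witness node u above which c never occurs within
   d levels; moving w_r to u deletes c from F_r and shrinks the window to width d.  The
   total palette size can drop at most 2^(min X)(k-1) times, so a window of length
   (M+1)^(2^(min X)(k-1)+1) <= hbar suffices. *)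

From mathcomp Require Import all_boot zify.
From Stdlib Require Import Classical ClassicalEpsilon.
Set Implicit Arguments. Unset Strict Implicit. Unset Printing Implicit Defensive.

Lemma sorted_nth_leq (X : seq nat) i j :
  sorted ltn X -> i <= j -> j < size X -> nth 0 X i <= nth 0 X j.
Proof.
move=> sX ij jX; have := @sorted_leq_nth _ leq leq_trans leqnn 0 X.
rewrite ltn_sorted_uniq_leq in sX; case/andP: sX => _ sX.
by apply => //; rewrite inE (leq_ltn_trans ij).
Qed.

Lemma prefix_size_eq (T : eqType) (s t : seq T) : prefix s t -> size s = size t -> s = t.
Proof. by rewrite prefixE => /eqP st eq_size; rewrite -st eq_size take_size. Qed.

Lemma prefix_comparable (T : eqType) (a b c : seq T) :
  prefix a c -> prefix b c -> prefix a b || prefix b a.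
Proof.
rewrite [prefix a c]prefixE [prefix b c]prefixE => /eqP ac /eqP bc.
have [ab|/ltnW ba] := leqP (size a) (size b).
  by rewrite prefixE -bc take_takel // ac eqxx.
by rewrite orbC prefixE -ac take_takel // bc eqxx.
Qed.

Lemma incompatibleC (a b : str) : incompatible a b = incompatible b a.
Proof. by rewrite /incompatible andbC. Qed.

Lemma incompatible_neq (a b : str) : incompatible a b -> a != b.
Proof. by case/andP=> ab _; apply: contraNneq ab => ->; rewrite prefix_refl. Qed.

Lemma neq_incompatible (a b : str) : size a = size b -> a != b -> incompatible a b.
Proof.
move=> eq_size ab; apply/andP; split; apply: contra ab => pre.
  by rewrite (prefix_size_eq pre eq_size).
by rewrite (prefix_size_eq pre (esym eq_size)).
Qed.

Lemma incompatible_no_common_ext (a b c : str) :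
  incompatible a b -> prefix a c -> prefix b c -> False.
Proof.
by case/andP=> /negPf ab /negPf ba ac bc; have := prefix_comparable ac bc; rewrite ab ba.
Qed.

Lemma incompatible_ext (a b a' b' : str) :
  incompatible a b -> prefix a a' -> prefix b b' -> incompatible a' b'.
Proof.
move=> ab aa' bb'; apply/andP; split; apply/negP => pre.
  exact: incompatible_no_common_ext ab (prefix_trans aa' pre) bb'.
exact: incompatible_no_common_ext ab aa' (prefix_trans bb' pre).
Qed.

Definition comparable_with (s : str) (S : seq str) : Prop :=
  forall z, z \in S -> prefix z s || prefix s z.

Lemma comparable_with_above (s z : str) (S : seq str) :
  comparable_with s S -> z \in S -> size s <= size z -> prefix s z.
Proof.
move=> cS zS le_sz; case/orP: (cS z zS) => // zs.
by rewrite (@prefix_size_eq _ z s zs) ?prefix_refl //; apply/eqP; rewrite eqn_leq size_prefix.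
Qed.

Definition prefixes (s : str) : seq str := [seq take i s | i <- iota 0 (size s).+1].

Lemma mem_prefixes (s z : str) : (z \in prefixes s) = prefix z s.
Proof.
apply/mapP/idP => [[i _ ->]|zs]; first exact: prefix_take.
exists (size z); first by rewrite mem_iota ltnS size_prefix.
by move: zs; rewrite prefixE => /eqP.
Qed.

Lemma is_tree_cat (S1 S2 : seq str) : is_tree S1 -> is_tree S2 -> is_tree (S1 ++ S2).
Proof.
move=> tS1 tS2 s t; rewrite !mem_cat => /orP[] tS st.
  by rewrite (tS1 s t).
by rewrite (tS2 s t) ?orbT.
Qed.

Definition splits_into (S : seq str) (s : str) (n : nat) : Prop :=
  exists t1 t2, t1 \in S /\ t2 \in S /\ size t1 = n /\ size t2 = n /\
    prefix s t1 /\ prefix s t2 /\ incompatible t1 t2 /\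
    (forall t, t \in S -> size t = n -> prefix s t -> t = t1 \/ t = t2).

Definition separated (n : nat) (S1 S2 : seq str) : Prop :=
  forall a b, a \in S1 -> b \in S2 -> n <= size a -> ~~ prefix a b.

Lemma separated_incompatible (t1 t2 : str) (S1 S2 : seq str) :
  incompatible t1 t2 -> size t1 = size t2 ->
  comparable_with t1 S1 -> comparable_with t2 S2 -> separated (size t1) S1 S2.
Proof.
move=> t12 eq_size c1 c2 a b aS bS le_a; apply/negP => ab.
have t1b := prefix_trans (comparable_with_above c1 aS le_a) ab.
have le_b : size t2 <= size b by rewrite -eq_size (leq_trans le_a) ?size_prefix.
exact: incompatible_no_common_ext t12 t1b (comparable_with_above c2 bS le_b).
Qed.

Lemma quasistrong_cat (Y : seq nat) (S1 S2 : seq str) :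
  sorted ltn Y -> separated (head 0 Y) S1 S2 -> separated (head 0 Y) S2 S1 ->
  quasistrong Y S1 -> quasistrong Y S2 -> quasistrong Y (S1 ++ S2).
Proof.
move=> sY; have head_le i : i < size Y -> head 0 Y <= nth 0 Y i.
  by rewrite -nth0; apply: sorted_nth_leq.
have side A B : separated (head 0 Y) A B -> quasistrong Y A ->
    forall i s, i.+1 < size Y -> s \in A -> size s = nth 0 Y i ->
    splits_into (A ++ B) s (nth 0 Y i.+1).
  move=> sepAB [_ splitA] i s iY sA eq_s.
  have [t1 [t2 [t1A [t2A [H1 [H2 [st1 [st2 [t12 uniq12]]]]]]]]] := splitA i iY s sA eq_s.
  exists t1, t2; rewrite !mem_cat t1A t2A; do 7 split => //.
  move=> t; rewrite mem_cat => /orP[tA|tB]; first exact: uniq12.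
  by rewrite (negPf (sepAB s t sA tB _)) // eq_s head_le // ltnW.
move=> sep12 sep21 [lev1 split1] q2; split.
  by move=> i iY; have [s [sS eq_s]] := lev1 i iY; exists s; rewrite mem_cat sS.
move=> i iY s; rewrite mem_cat => /orP[sS|sS] eq_s; first exact: side.
have [t1 [t2 [t1S [t2S [H1 [H2 [st1 [st2 [t12 uniq12]]]]]]]]] := side _ _ sep21 q2 i s iY sS eq_s.
exists t1, t2; rewrite !mem_cat orbC -mem_cat t1S orbC -mem_cat t2S; do 7 split => //.
by move=> t; rewrite mem_cat orbC -mem_cat; apply: uniq12.
Qed.

Definition edges_satisfy (E : str -> str -> Prop) (Y : seq nat) (S : seq str) : Prop :=
  forall i, i.+1 < size Y -> forall a b, a \in S -> b \in S ->
    size a = nth 0 Y i -> size b = nth 0 Y i.+1 -> prefix a b -> E a b.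

Lemma edges_satisfy_cat E (Y : seq nat) (S1 S2 : seq str) :
  sorted ltn Y -> separated (head 0 Y) S1 S2 -> separated (head 0 Y) S2 S1 ->
  edges_satisfy E Y S1 -> edges_satisfy E Y S2 -> edges_satisfy E Y (S1 ++ S2).
Proof.
move=> sY sep12 sep21 E1 E2 i iY a b; rewrite !mem_cat.
have le_a : size a = nth 0 Y i -> head 0 Y <= size a.
  by move=> ->; rewrite -nth0 sorted_nth_leq // ltnW.
by case/orP=> aS /orP[] bS eq_a eq_b ab;
  [exact: E1 aS bS eq_a eq_b ab | by rewrite (negPf (sep12 _ _ aS bS (le_a eq_a))) in ab
  | by rewrite (negPf (sep21 _ _ aS bS (le_a eq_a))) in ab | exact: E2 aS bS eq_a eq_b ab].
Qed.

Lemma is_leaf_sub (S S' : seq str) (l : str) :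
  {subset S' <= S} -> l \in S' -> is_leaf S l -> is_leaf S' l.
Proof. by move=> sub lS' [_ maxl]; split => // t tS'; apply/maxl/sub. Qed.

Lemma quasistrong_cons (x y : nat) (Y : seq nat) (S : seq str) :
  quasistrong (y :: Y) S -> (exists s, s \in S /\ size s = x) ->
  (forall s, s \in S -> size s = x -> splits_into S s y) -> quasistrong (x :: y :: Y) S.
Proof.
by move=> [lev split] root root_split; split=> [[|i]|[|i]] //= iY; [apply: lev | apply: split].
Qed.

Lemma edges_satisfy_cons E (x y : nat) (Y : seq nat) (S : seq str) :
  edges_satisfy E (y :: Y) S ->
  (forall a b, a \in S -> b \in S -> size a = x -> size b = y -> prefix a b -> E a b) ->
  edges_satisfy E (x :: y :: Y) S.
Proof. by move=> edges root_edges [|i] //= iY; apply: edges. Qed.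

Section Skeleton.
Variables (T : seq str) (E : str -> str -> Prop) (Q : str -> Prop).
Hypothesis tree_T : is_tree T.

Fixpoint skeleton (P : seq nat) (s : str) : Prop :=
  match P with
  | [::] => Q s
  | p :: P' => exists t1 t2, t1 \in T /\ t2 \in T /\ size t1 = p /\ size t2 = p /\
      prefix s t1 /\ prefix s t2 /\ incompatible t1 t2 /\ E s t1 /\ E s t2 /\
      skeleton P' t1 /\ skeleton P' t2
  end.

Record subtree_at (s : str) (P : seq nat) (S : seq str) : Prop := SubtreeAt {
  subtree_is_tree : is_tree S;
  subtree_sub : {subset S <= T};
  subtree_root : s \in S;
  subtree_comparable : comparable_with s S;
  subtree_quasistrong : quasistrong (size s :: P) S;
  subtree_edges : edges_satisfy E (size s :: P) S;
  subtree_leaves : forall l, is_leaf S l -> Q l }.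

Lemma subtree_path (s : str) : s \in T -> Q s -> subtree_at s [::] (prefixes s).
Proof.
move=> sT Qs; split => //.
- by move=> y z; rewrite !mem_prefixes => zs /prefix_trans; apply.
- by move=> z; rewrite mem_prefixes => /tree_T; apply.
- by rewrite mem_prefixes prefix_refl.
- by move=> z; rewrite mem_prefixes => ->.
- split=> [[|//] _|//]; by exists s; rewrite mem_prefixes prefix_refl.
- move=> l [lS maxl]; move: (lS); rewrite mem_prefixes => ls.
  by rewrite -(maxl s) // mem_prefixes prefix_refl.
Qed.

Lemma subtree_join (s t1 t2 : str) (p : nat) (P : seq nat) (S1 S2 : seq str) :
  sorted ltn (p :: P) -> size t1 = p -> size t2 = p ->
  prefix s t1 -> prefix s t2 -> incompatible t1 t2 -> E s t1 -> E s t2 ->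
  subtree_at t1 P S1 -> subtree_at t2 P S2 -> subtree_at s (p :: P) (S1 ++ S2).
Proof.
move=> sP eq1 eq2 st1 st2 t12 E1 E2 [tr1 sub1 r1 c1 q1 e1 l1] [tr2 sub2 r2 c2 q2 e2 l2].
rewrite eq1 in q1 e1; rewrite eq2 in q2 e2.
have sep12 : separated p S1 S2.
  by rewrite -eq1; apply: separated_incompatible c1 c2; rewrite // eq1 eq2.
have sep21 : separated p S2 S1.
  by rewrite -eq2; apply: separated_incompatible c2 c1; rewrite 1?incompatibleC // eq1 eq2.
have cS : comparable_with s (S1 ++ S2).
  move=> z; rewrite mem_cat => /orP[] zS; [case/orP: (c1 z zS) | case/orP: (c2 z zS)];
    by [move/prefix_comparable; apply | move=> tz; rewrite (prefix_trans _ tz) ?orbT].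
have sS : s \in S1 ++ S2 by rewrite mem_cat (tr1 s t1 r1 st1).
have at_s a : a \in S1 ++ S2 -> size a = size s -> a = s.
  move=> aS eq_a; case/orP: (cS a aS) => pre; first exact: prefix_size_eq pre eq_a.
  exact/esym/(prefix_size_eq pre)/esym.
have at_p b : b \in S1 ++ S2 -> size b = p -> b = t1 \/ b = t2.
  rewrite mem_cat => /orP[] bS eq_b; [left | right];
    apply/esym/prefix_size_eq; rewrite ?eq1 ?eq2 //.
    by apply: comparable_with_above c1 bS _; rewrite eq1 eq_b.
  by apply: comparable_with_above c2 bS _; rewrite eq2 eq_b.
split.
- exact: is_tree_cat.
- by move=> z; rewrite mem_cat => /orP[]; [apply: sub1 | apply: sub2].
- exact: sS.
- exact: cS.
- apply: quasistrong_cons; first exact: quasistrong_cat.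
    by exists s.
  move=> a aS /(at_s a aS) ->; exists t1, t2.
  by rewrite !mem_cat r1 r2 orbT; do 7 split => //; move=> b bS eq_b _; apply: at_p.
- apply: edges_satisfy_cons; first exact: edges_satisfy_cat.
  by move=> a b aS bS /(at_s a aS) -> /(at_p b bS) [] ->.
- move=> l leaf; have := leaf.1; rewrite mem_cat => /orP[] lS; [apply: l1 | apply: l2];
    by apply: is_leaf_sub lS leaf => z zS; rewrite mem_cat zS ?orbT.
Qed.

Lemma subtree_of_skeleton (P : seq nat) (s : str) :
  s \in T -> sorted ltn P -> skeleton P s -> exists S, subtree_at s P S.
Proof.
elim: P s => [|p P IH] s sT sP; first by exists (prefixes s); apply: subtree_path.
move=> [t1 [t2 [t1T [t2T [eq1 [eq2 [st1 [st2 [t12 [E1 [E2 [sk1 sk2]]]]]]]]]]]].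
have [S1 sub1] := IH t1 t1T (path_sorted sP) sk1.
have [S2 sub2] := IH t2 t2T (path_sorted sP) sk2.
by exists (S1 ++ S2); apply: subtree_join sub1 sub2.
Qed.

End Skeleton.

Definition on_level (T : seq str) (X : seq nat) (j : nat) (u : str) : Prop :=
  u \in T /\ size u = nth 0 X j.

Section Levels.
Variables (T : seq str) (X : seq nat).
Hypothesis quasistrong_T : quasistrong X T.

Lemma level_nonempty j : j < size X -> exists u, on_level T X j u.
Proof. exact: quasistrong_T.1. Qed.

Lemma level_children j u : on_level T X j u -> j.+1 < size X ->
  exists u0 u1, on_level T X j.+1 u0 /\ on_level T X j.+1 u1 /\
    prefix u u0 /\ prefix u u1 /\ incompatible u0 u1.
Proof.
move=> [uT eq_u] jX; have [t1 [t2 [t1T [t2T [eq1 [eq2 [ut1 [ut2 [t12 _]]]]]]]]] :=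
  quasistrong_T.2 j jX u uT eq_u.
by exists t1, t2.
Qed.

Lemma level_extend j j' u : on_level T X j u -> j <= j' -> j' < size X ->
  exists2 t, on_level T X j' t & prefix u t.
Proof.
move=> uj; elim: j' => [|j' IH].
  by rewrite leqn0 => /eqP j0; rewrite j0 in uj; exists u; last exact: prefix_refl.
rewrite leq_eqVlt => /orP[/eqP <-|lt_jj'] jX; first by exists u; last exact: prefix_refl.
have [t tj' ut] := IH lt_jj' (ltnW jX).
have [t0 [_ [t0j' [_ [tt0 _]]]]] := level_children tj' jX.
by exists t0 => //; apply: prefix_trans ut tt0.
Qed.

Section Labels.
Variables (k : nat) (R : str -> 'I_k -> Prop).

Definition labels_collide (n : nat) (s : str) : Prop :=
  exists t t' c, on_level T X n t /\ on_level T X n t' /\ prefix s t /\ prefix s t' /\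
    t != t' /\ R t c /\ R t' c.

Definition labels_realised (n : nat) (s : str) (A : {set 'I_k}) : Prop :=
  forall c, c \in A -> exists t, on_level T X n t /\ prefix s t /\ R t c.

Lemma labels_collide_or_spread d j s : on_level T X j s -> j + d < size X ->
  (forall t, on_level T X (j + d) t -> prefix s t -> exists c, R t c) ->
  labels_collide (j + d) s \/ exists2 A : {set 'I_k}, 2 ^ d <= #|A| & labels_realised (j + d) s A.
Proof.
elim: d j s => [|d IH] j s sj jd lab.
  rewrite addn0 in lab *; have [c Rc] := lab s sj (prefix_refl s).
  right; exists [set c]; rewrite ?cards1 // => c'; rewrite inE => /eqP ->.
  by exists s; rewrite prefix_refl.
have jX : j.+1 < size X by apply: leq_ltn_trans jd; rewrite addnS ltnS leq_addr.
have [s0 [s1 [s0j [s1j [ss0 [ss1 s01]]]]]] := level_children sj jX.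
rewrite -addSnnS in jd lab *.
have lab_above si : prefix s si ->
    forall t, on_level T X (j.+1 + d) t -> prefix si t -> exists c, R t c.
  by move=> ssi t tj sit; apply: lab tj (prefix_trans ssi sit).
have realised_above si A : prefix s si -> labels_realised (j.+1 + d) si A ->
    labels_realised (j.+1 + d) s A.
  move=> ssi real c /real [t [tj [sit Rt]]].
  by exists t; split; last split; first exact: tj; first exact: prefix_trans ssi sit.
have [[t [t' [c [tj [t'j [s0t [s0t' rest]]]]]]]|[A0 A0size A0real]] :=
  IH _ _ s0j jd (lab_above _ ss0).
  by left; exists t, t', c; rewrite (prefix_trans ss0 s0t) (prefix_trans ss0 s0t').
have [[t [t' [c [tj [t'j [s1t [s1t' rest]]]]]]]|[A1 A1size A1real]] :=
  IH _ _ s1j jd (lab_above _ ss1).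
  by left; exists t, t', c; rewrite (prefix_trans ss1 s1t) (prefix_trans ss1 s1t').
have [disj|[c]] := set_0Vmem (A0 :&: A1).
  right; exists (A0 :|: A1).
    by rewrite cardsU disj cards0 subn0 expnS mul2n -addnn leq_add.
  move=> c; rewrite inE => /orP[] cA;
    [exact: realised_above ss0 A0real c cA | exact: realised_above ss1 A1real c cA].
rewrite inE => /andP[/A0real [t [tj [s0t Rt]]] /A1real [t' [t'j [s1t' Rt']]]].
left; exists t, t', c; rewrite (prefix_trans ss0 s0t) (prefix_trans ss1 s1t').
by do 4 split => //; split; first exact: incompatible_neq (incompatible_ext s01 s0t s1t').
Qed.

Lemma level_pigeonhole d j s : k < 2 ^ d -> on_level T X j s -> j + d < size X ->
  (forall t, on_level T X (j + d) t -> prefix s t -> exists c, R t c) ->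
  labels_collide (j + d) s.
Proof.
move=> lt_k sj jd lab; have [//|[A A_size _]] := labels_collide_or_spread sj jd lab.
by have := leq_trans A_size (max_card A); rewrite card_ord leqNgt lt_k.
Qed.

End Labels.
End Levels.

Fixpoint stride (X : seq nat) (j d m : nat) : seq nat :=
  if m is m'.+1 then nth 0 X (j + d) :: stride X (j + d) d m' else [::].

Lemma size_stride X j d m : size (stride X j d m) = m.
Proof. by elim: m j => [|m IH] j //=; rewrite IH. Qed.

Lemma stride_sub X j d m : j + m * d < size X -> {subset stride X j d m <= X}.
Proof.
elim: m j => [|m IH] j //= jX y; rewrite inE => /orP[/eqP ->|y_in].
  by apply: mem_nth; apply: leq_ltn_trans jX; rewrite mulSn leq_add2l leq_addr.
by apply: (IH (j + d)) y_in; rewrite -addnA -mulSn.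
Qed.

Lemma sorted_stride X j d m : sorted ltn X -> 0 < d -> j + m * d < size X ->
  sorted ltn (nth 0 X j :: stride X j d m).
Proof.
move=> sX d0; elim: m j => [|m IH] j //= jX; apply/andP; split.
  have jdX : j + d < size X by apply: leq_ltn_trans jX; rewrite mulSn leq_add2l leq_addr.
  apply: (sorted_ltn_nth ltn_trans 0 sX); rewrite ?inE ?(leq_ltn_trans (leq_addr d j) jdX) //.
  by rewrite -{1}[j]addn0 ltn_add2l.
by have := IH (j + d); rewrite -addnA -mulSn; apply.
Qed.

Lemma ltn_e_inv k : k < 2 ^ e_inv k.
Proof. by rewrite /e_inv; case: ex_minnP. Qed.

Lemma e_inv_gt0 k : 0 < k -> 0 < e_inv k.
Proof. by move=> k0; have := ltn_e_inv k; case: (e_inv k) => //; rewrite expn0 ltnNge k0. Qed.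

Definition reaches_colour (T : seq str) (Y : seq nat) k (C : str -> 'I_k) (c : 'I_k)
    (l : str) : Prop :=
  exists t, t \in T /\ size t = maxX Y /\ prefix l t /\ C t = c.

Lemma colour_skeleton k (C : str -> 'I_k) (T : seq str) (Y : seq nat) :
  quasistrong Y T -> forall m j s, on_level T Y j s -> j + m * e_inv k < size Y ->
  exists c, skeleton T (fun _ _ => True) (reaches_colour T Y C c) (stride Y j (e_inv k) m) s.
Proof.
move=> qT; elim=> [|m IH] j s sj jY.
  have [t [tT eq_t] st] : exists2 t, on_level T Y (size Y).-1 t & prefix s t.
    by apply: (level_extend qT sj); lia.
  by exists (C t), t; rewrite /maxX -nth_last eq_t.
set e := e_inv k in jY IH *.
have je : j + e < size Y by apply: leq_ltn_trans jY; rewrite mulSn leq_add2l leq_addr.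
have lab t : on_level T Y (j + e) t -> prefix s t ->
    exists c, skeleton T (fun _ _ => True) (reaches_colour T Y C c) (stride Y (j + e) e m) t.
  by move=> tj _; apply: IH tj _; rewrite -addnA -mulSn.
have [t [t' [c [[tT eq_t] [[t'T eq_t'] [st [st' [tt' [sk sk']]]]]]]]] :=
  level_pigeonhole qT (ltn_e_inv k) sj je lab.
exists c, t, t'; do 6 split => //.
by split; first by apply: neq_incompatible; rewrite ?eq_t ?eq_t'.
Qed.

Fixpoint persist_size (x e i : nat) : nat :=
  if i is i'.+1 then (persist_size x e i').-1 * e + 1 else x.+1.

Lemma persist_size_gt0 x e i : 0 < persist_size x e i.
Proof. by case: i => //= i; rewrite addn1. Qed.

Lemma persistent_of_size k i (Y : seq nat) : 0 < k -> sorted ltn Y -> 0 < size Y ->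
  persist_size (minX Y) (e_inv k) i <= size Y -> persistent k i Y.
Proof.
move=> k0; elim: i Y => [|i IH] Y sY Y0 //=.
set e := e_inv k; set m := persist_size (minX Y) e i => le_Y.
have lt_Y : 0 + m.-1 * e < size Y by rewrite add0n -addn1.
have sY' := sorted_stride sY (e_inv_gt0 k0) lt_Y.
exists (nth 0 Y 0 :: stride Y 0 e m.-1); do 2 split => //.
  move=> y; rewrite inE => /orP[/eqP ->|]; [exact: mem_nth | exact: stride_sub].
split; first by apply: IH; rewrite //= size_stride nth0 prednK ?persist_size_gt0.
move=> T tT qT C; have [r [rT eq_r]] := level_nonempty qT Y0.
have [c sk] := colour_skeleton C qT (conj rT eq_r) lt_Y.
have [S [tS subS _ _ qS _ leaves]] := subtree_of_skeleton tT rT (path_sorted sY') sk.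
by exists c, S; rewrite eq_r in qS.
Qed.

Definition colour_between k (C : str -> 'I_k) (c : 'I_k) (a b : str) : Prop :=
  exists z, prefix a z /\ prefix z b /\ C z = c.

Lemma colour_between_prefix k (C : str -> 'I_k) (c : 'I_k) (a b : str) :
  colour_between C c a b -> prefix a b.
Proof. by case=> z [az [zb _]]; apply: prefix_trans az zb. Qed.

Lemma prehomogeneous_of_edges k (C : str -> 'I_k) (c : 'I_k) (Y : seq nat) (S : seq str) :
  is_tree S -> edges_satisfy (colour_between C c) Y S -> prehomogeneous C Y S.
Proof.
move=> tS edges; exists c => i iY a b aS bS eq_a eq_b ab.
have [z [az [zb Cz]]] := edges i iY a b aS bS eq_a eq_b ab.
by exists z; split; first exact: tS bS zb.
Qed.

Lemma sorted_ltn_cons_leq (a b : nat) (L : seq nat) :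
  a <= b -> sorted ltn (b :: L) -> sorted ltn (a :: L).
Proof. by case: L => //= c L ab /andP[bc ->]; rewrite (leq_ltn_trans ab bc). Qed.

Section Superpersistence.
Variables (X : seq nat) (k : nat) (C : str -> 'I_k) (M : nat).
Hypothesis sorted_X : sorted ltn X.

Definition dense (T : seq str) (w : str) (c : 'I_k) (lo d : nat) : Prop :=
  forall u j, lo <= j -> j + d <= lo + M * d.+1 -> on_level T X j u -> prefix w u ->
    exists2 t, on_level T X (j + d) t & colour_between C c u t.

Lemma not_dense T w c lo d : ~ dense T w c lo d ->
  exists u j, [/\ lo <= j, j + d <= lo + M * d.+1, on_level T X j u, prefix w u &
    forall t z, on_level T X (j + d) t -> prefix u z -> prefix z t -> C z <> c].
Proof.
move=> not_dense; apply: NNPP => no_witness; apply: not_dense => u j lo_j jd uj wu.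
apply: NNPP => no_t; apply: no_witness; exists u, j; split => // t z tj uz zt Cz.
by apply: no_t; exists t => //; exists z.
Qed.

Lemma skeleton_of_dense (T : seq str) (w : str) (c : 'I_k) (lo d : nat) :
  quasistrong X T -> dense T w c lo d -> lo + M * d.+1 < size X ->
  forall m s u j, prefix s u -> on_level T X j u -> prefix w u -> lo <= j ->
    j + m * d.+1 <= lo + M * d.+1 ->
  skeleton T (colour_between C c) (fun _ => True) (stride X j d.+1 m) s.
Proof.
move=> qT dT top_X; elim=> [|m IH] s u j su uj wu lo_j jm //=.
have jX : j.+1 < size X by lia.
have child ui : on_level T X j.+1 ui -> prefix u ui ->
    exists t, [/\ on_level T X (j + d.+1) t, colour_between C c s t, prefix ui t &
      skeleton T (colour_between C c) (fun _ => True) (stride X (j + d.+1) d.+1 m) t].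
  move=> uij uui; have uj_d : j.+1 + d <= lo + M * d.+1 by lia.
  have [t tj [z [uiz [zt Cz]]]] := dT ui j.+1 (leqW lo_j) uj_d uij (prefix_trans wu uui).
  have uit := prefix_trans uiz zt; rewrite addSnnS in tj.
  exists t; split => //; first by exists z; rewrite (prefix_trans su (prefix_trans uui uiz)).
  apply: IH (prefix_refl t) tj _ _ _; first exact: prefix_trans wu (prefix_trans uui uit).
    exact: leq_trans lo_j (leq_addr _ _).
  by rewrite -addnA -mulSn.
have [u0 [u1 [u0j [u1j [uu0 [uu1 u01]]]]]] := level_children qT uj jX.
have [t0 [[t0T eq0] E0 u0t0 sk0]] := child u0 u0j uu0.
have [t1 [[t1T eq1] E1 u1t1 sk1]] := child u1 u1j uu1.
exists t0, t1; rewrite (colour_between_prefix E0) (colour_between_prefix E1); do 6 split => //.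
by split; first exact: incompatible_ext u01 u0t0 u1t1.
Qed.

Lemma prehomogeneous_subtree (T : seq str) (w : str) (c : 'I_k) (lo d jw : nat) :
  is_tree T -> quasistrong X T -> dense T w c lo d -> lo + M * d.+1 < size X ->
  jw <= lo -> on_level T X jw w ->
  exists S, is_tree S /\ {subset S <= T} /\
    quasistrong (nth 0 X 0 :: stride X lo d.+1 M) S /\
    prehomogeneous C (nth 0 X 0 :: stride X lo d.+1 M) S.
Proof.
move=> tT qT dT top_X jw_lo wjw; have lo_X : lo < size X by lia.
have [u ulo wu] := level_extend qT wjw jw_lo lo_X.
set s := take (nth 0 X 0) w.
have su : prefix s u := prefix_trans (prefix_take w _) wu.
have sk := skeleton_of_dense qT dT top_X su ulo wu (leqnn lo) (leqnn _).
have eq_s : size s = nth 0 X 0.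
  by rewrite size_takel // wjw.2 sorted_nth_leq // (leq_ltn_trans jw_lo).
have sT : s \in T := tT s u ulo.1 su.
have sY := path_sorted (sorted_stride sorted_X (ltn0Sn d) top_X).
have [S [tS subS _ _ qS eS _]] := subtree_of_skeleton tT sT sY sk.
rewrite eq_s in qS eS; exists S; do 3 split => //.
exact: prehomogeneous_of_edges tS eS.
Qed.

Fixpoint window (p : nat) : nat := if p is p'.+1 then M * (window p').+1 else 0.

Section Family.
Variables (n : nat) (Tf : str -> seq str).
Hypothesis Tf_tree : forall r : str, size r = n -> is_tree (Tf r) /\ quasistrong X (Tf r).
Implicit Types (r : n.-tuple bool) (w : n.-tuple bool -> str) (F : n.-tuple bool -> {set 'I_k}).

Lemma quasistrong_Tf r : quasistrong X (Tf r).
Proof. exact: (Tf_tree (size_tuple r)).2. Qed.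

Definition palette_inv (lo top : nat) (w : n.-tuple bool -> str)
    (F : n.-tuple bool -> {set 'I_k}) : Prop :=
  forall r, [/\ exists2 jw, jw <= lo & on_level (Tf r) X jw (w r),
    forall t z, on_level (Tf r) X top t -> prefix (w r) z -> prefix z t -> C z \in F r
    & 0 < #|F r| ].

Definition potential (F : n.-tuple bool -> {set 'I_k}) : nat := \sum_r (#|F r|).-1.

Lemma dense_of_palette1 lo d w F r c :
  palette_inv lo (lo + M * d.+1) w F -> lo + M * d.+1 < size X ->
  #|F r| <= 1 -> c \in F r -> dense (Tf r) (w r) c lo d.
Proof.
move=> inv top_X F1 cF u j lo_j jd uj wu; have [_ palette _] := inv r.
have [t tj ut] := level_extend (quasistrong_Tf r) uj (leq_addr d j) (leq_ltn_trans jd top_X).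
have [t' t'top ut'] := level_extend (quasistrong_Tf r) uj (leq_trans (leq_addr d j) jd) top_X.
exists t => //; exists u; split; first exact: prefix_refl.
split => //; by move/card_le1_eqP: F1; apply => //; exact: palette t'top wu ut'.
Qed.

Lemma palette_refine lo top d w F r0 c0 u j :
  palette_inv lo top w F -> top < size X -> c0 \in F r0 -> 1 < #|F r0| ->
  lo <= j -> j + d <= top -> on_level (Tf r0) X j u -> prefix (w r0) u ->
  (forall t z, on_level (Tf r0) X (j + d) t -> prefix u z -> prefix z t -> C z <> c0) ->
  palette_inv j (j + d) (fun r => if r == r0 then u else w r)
    (fun r => if r == r0 then F r0 :\ c0 else F r).
Proof.
move=> inv top_X c0F F_gt1 lo_j jd uj wu avoid r.
have lift r' t z :
    on_level (Tf r') X (j + d) t -> prefix (w r') z -> prefix z t -> C z \in F r'.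
  move=> tj wz zt; have [t' t'top tt'] := level_extend (quasistrong_Tf r') tj jd top_X.
  by have [_ palette _] := inv r'; apply: palette t'top wz (prefix_trans zt tt').
have [->|_] := eqVneq r r0.
  split; first by exists j.
    move=> t z tj uz zt; rewrite !inE (lift r0 t z tj (prefix_trans wu uz) zt) andbT.
    exact/eqP/(avoid t z tj uz zt).
  by move: F_gt1; rewrite (cardsD1 c0) c0F.
have [[jw jw_lo wjw] _ F_gt0] := inv r.
by split; [exists jw; first exact: leq_trans jw_lo lo_j | exact: lift |].
Qed.

Lemma potential_refine F r0 c0 : c0 \in F r0 -> 1 < #|F r0| ->
  potential (fun r => if r == r0 then F r0 :\ c0 else F r) < potential F.
Proof.
move=> c0F F_gt1; rewrite /potential (bigD1 r0) //= [ltnRHS](bigD1 r0) //= eqxx.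
rewrite (eq_bigr (fun r => (#|F r|).-1)) => [|r /negPf ->] //.
by rewrite ltn_add2r; move: F_gt1; rewrite (cardsD1 c0 (F r0)) c0F /=; lia.
Qed.

Lemma dense_or_refinable lo d w F :
  palette_inv lo (lo + M * d.+1) w F -> lo + M * d.+1 < size X ->
  (forall r, exists c, dense (Tf r) (w r) c lo d) \/
  exists r0 c0, [/\ c0 \in F r0, 1 < #|F r0| & ~ dense (Tf r0) (w r0) c0 lo d].
Proof.
move=> inv top_X.
have [|not_all] := classic (forall r, exists c, dense (Tf r) (w r) c lo d).
  by left.
right; have [r0 no_dense] := not_all_ex_not _ _ not_all.
have [_ _ /card_gt0P [c0 c0F]] := inv r0.
exists r0, c0; split => //; last by move=> dense0; apply: no_dense; exists c0.
rewrite ltnNge; apply/negP => F1; apply: no_dense; exists c0.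
exact: dense_of_palette1 inv top_X F1 c0F.
Qed.

Lemma dense_stage p : forall lo w F, potential F <= p -> lo + window p.+1 < size X ->
  palette_inv lo (lo + window p.+1) w F ->
  exists lo' d w', lo' + M * d.+1 < size X /\ forall r,
    (exists2 jw, jw <= lo' & on_level (Tf r) X jw (w' r)) /\
    exists c, dense (Tf r) (w' r) c lo' d.
Proof.
elim: p => [|p IH] lo w F pot top_X inv.
  have [dense_all|[r0 [c0 [c0F F_gt1 _]]]] := dense_or_refinable inv top_X.
    by exists lo, 0, w; split => // r; split; [case: (inv r) | apply: dense_all].
  by have := potential_refine c0F F_gt1; rewrite ltnNge (leq_trans pot).
have [dense_all|[r0 [c0 [c0F F_gt1 not_dense0]]]] := dense_or_refinable inv top_X.
  by exists lo, (window p.+1), w; split => // r; split; [case: (inv r) | apply: dense_all].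
have [u [j [lo_j jd uj wu avoid]]] := not_dense not_dense0.
apply: IH (palette_refine inv top_X c0F F_gt1 lo_j jd uj wu avoid).
  by rewrite -ltnS (leq_trans (potential_refine c0F F_gt1)).
exact: leq_ltn_trans jd top_X.
Qed.

Lemma dense_family : 0 < k -> 0 < size X -> window (2 ^ n * k.-1).+1 < size X ->
  exists lo d w, lo + M * d.+1 < size X /\ forall r,
    (exists2 jw, jw <= lo & on_level (Tf r) X jw (w r)) /\
    exists c, dense (Tf r) (w r) c lo d.
Proof.
move=> k0 X0 top_X.
have [w0 w0_root] : exists w0, forall r, on_level (Tf r) X 0 (w0 r).
  apply: (ClassicalEpsilon.choice (fun r => on_level (Tf r) X 0)) => r.
  exact: (level_nonempty (quasistrong_Tf r) X0).
apply: (dense_stage (p := 2 ^ n * k.-1) (lo := 0) (w := w0) (F := fun=> setT)) => // [|r].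
  rewrite /potential (eq_bigr (fun=> k.-1)) => [|r _]; last by rewrite cardsT card_ord.
  by rewrite sum_nat_const card_tuple card_bool.
by split; [exists 0 | move=> *; rewrite in_setT | rewrite cardsT card_ord].
Qed.

Lemma prehomogeneous_family : 0 < k -> 0 < size X -> window (2 ^ n * k.-1).+1 < size X ->
  exists Y (Sf : str -> seq str), [/\ sorted ltn Y, {subset Y <= X}, minX Y = minX X,
    M < size Y & forall r : str, size r = n ->
      is_tree (Sf r) /\ {subset Sf r <= Tf r} /\ quasistrong Y (Sf r) /\ prehomogeneous C Y (Sf r)].
Proof.
move=> k0 X0 top_X; have [lo [d [w [top_X' dense_w]]]] := dense_family k0 X0 top_X.
set Y := nth 0 X 0 :: stride X lo d.+1 M.
have subtree (r : str) : exists S, size r = n ->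
    is_tree S /\ {subset S <= Tf r} /\ quasistrong Y S /\ prehomogeneous C Y S.
  have [eq_r|neq_r] := eqVneq (size r) n; last by exists [::] => /eqP; rewrite (negPf neq_r).
  have [tr qr] := Tf_tree eq_r.
  have [[jw jw_lo wjw] [c dense_c]] := dense_w (Tuple (introT eqP eq_r)).
  by have [S HS] := prehomogeneous_subtree tr qr dense_c top_X' jw_lo wjw; exists S.
have [Sf Sf_spec] := ClassicalEpsilon.choice _ subtree.
exists Y, Sf; split => //=.
- apply: sorted_ltn_cons_leq (sorted_stride sorted_X _ top_X') => //.
  by rewrite sorted_nth_leq // (leq_ltn_trans (leq_addr _ _) top_X').
- move=> y; rewrite inE => /orP[/eqP ->|]; [exact: mem_nth | exact: stride_sub].
- by rewrite size_stride.
Qed.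

End Family.
End Superpersistence.

Lemma window_lt M p : window M p < M.+1 ^ p.
Proof.
elim: p => [|p IH] //=; rewrite expnS (leq_ltn_trans (leq_mul (leqnn M) IH)) //.
by rewrite ltn_mul2r expn_gt0 ltnSn.
Qed.

Lemma g_fun_ge m k : 1 < m -> m.-1 * e_inv k + m.-1 <= g_fun m k.
Proof.
move=> m_gt1; rewrite /g_fun leq_add2l -[leqLHS](mulnK _ (isT : 0 < 2)).
by rewrite leq_div2r // leq_mul2l m_gt1 orbT.
Qed.

Lemma gbar_ge x k i : 0 < k -> x + k + 1 <= gbar x k i.
Proof.
move=> k0; elim: i => [|i IH] //=.
have gbar_gt1 : 1 < gbar x k i by apply: leq_trans IH; lia.
apply: leq_trans IH (leq_trans _ (g_fun_ge _ gbar_gt1)).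
have := leq_pmulr (gbar x k i).-1 (e_inv_gt0 k0); lia.
Qed.

Lemma persist_size_le_gbar x k i : 0 < k -> persist_size x (e_inv k) i <= gbar x k i.
Proof.
move=> k0; elim: i => [|i IH] /=; first lia.
have gbar_gt1 : 1 < gbar x k i by apply: leq_trans (gbar_ge x i k0); lia.
apply: leq_trans (g_fun_ge _ gbar_gt1).
have : (persist_size x (e_inv k) i).-1 * e_inv k <= (gbar x k i).-1 * e_inv k.
  by rewrite leq_mul2r -subn1 -[(gbar _ _ _).-1]subn1 leq_sub2r ?orbT.
lia.
Qed.

Lemma exp_le_hbar x n k M : 0 < k -> k <= n -> M <= n ->
  M.+1 ^ (2 ^ x * k.-1).+1 <= hbar x n k.
Proof.
move=> k0 kn Mn; set N := 2 ^ x; have N0 : 0 < N by rewrite expn_gt0.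
rewrite /hbar /h_fun -/N; apply: leq_trans (leq_pmulr _ _); last by rewrite expn_gt0 k0.
apply: (@leq_trans ((2 ^ n) ^ (N * k.-1).+1)).
  by rewrite leq_exp2r // (leq_ltn_trans Mn) // ltn_expl.
rewrite -expnM leq_exp2l // -mulnA (leq_trans _ (leq_pmull _ (e_inv_gt0 k0))) //.
have n_le : n <= 2 ^ (2 * n) by apply: ltnW; apply: leq_trans (ltn_expl n (isT : 1 < 2)) _;
  rewrite leq_exp2l //; lia.
have sq_le : n * n <= 2 ^ (5 * n).
  by apply: leq_trans (leq_mul n_le n_le) _; rewrite -expnD leq_exp2l //; lia.
have : (N * k.-1).+1 <= N * n.
  by rewrite (leq_trans _ (leq_mul (leqnn N) kn)) // -{2}(prednK k0) mulnS addnC -addn1 leq_add2l.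
by move/(leq_mul (leqnn n))/leq_trans; apply; rewrite mulnCA leq_mul2l sq_le orbT.
Qed.

Theorem lemma2p18 (k i : nat) (X : seq nat) :
  1 <= k -> sorted ltn X -> X != [::] ->
  hbar (minX X) (gbar (minX X) k i) k <= size X ->
  superpersistent k i X.
Proof.
move=> k0 sorted_X X_nil size_X Tf Tf_tree C.
have X0 : 0 < size X by rewrite lt0n size_eq0.
set M := persist_size (minX X) (e_inv k) i.
have top_X : window M (2 ^ minX X * k.-1).+1 < size X.
  apply: leq_trans (window_lt _ _) (leq_trans (exp_le_hbar _ k0 _ _) size_X).
    by apply: leq_trans (gbar_ge _ i k0); lia.
  exact: persist_size_le_gbar.
have [Y [Sf [sorted_Y YX minY M_lt Sf_spec]]] :=
  prehomogeneous_family C sorted_X Tf_tree k0 X0 top_X.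
exists Y, Sf; do 2 split => //; split; last exact: Sf_spec.
apply: persistent_of_size k0 sorted_Y (leq_ltn_trans (leq0n M) M_lt) _.
by rewrite minY ltnW.
Qed.
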